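(* Let $\mathscr C$ be a category with all small coproducts, well-powered and equipped with a factorization system $(\mathscr E,\mathscr M)$ with $\mathscr M$ consisting of monomorphisms, and let $F\colon\mathscr C\to\mathscr C$ preserve intersections. Let $(C,c,i_C)$ be an $I$-pointed $F$-coalgebra. Define subobjects $m_k\colon C_k\to C$ ($k\in\mathbb N$) by letting $i_C=m_0\cdot i'_C$ be the $(\mathscr E,\mathscr M)$-factorization of $i_C$, and $m_{k+1}=\ominus_c(m_k)$, and let $m\colon R\to C$ be the union $\bigcup_{k\in\mathbb N}m_k$ in $\mathrm{Sub}(C)$. Then $R$ carries an $I$-pointing $i_R$ and a coalgebra structure $r\colon R\to FR$ such that $m\colon(R,r,i_R)\to(C,c,i_C)$ is a homomorphism of $I$-pointed coalgebras, and $(R,r,i_R)$ is reachable; i.e. $m$ is a reachable subcoalgebra of $(C,c,i_C)$.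
   Context: A factorization system $(\mathscr E,\mathscr M)$: classes closed under composition with isomorphisms, every morphism factors as $m\cdot e$ with $e\in\mathscr E,m\in\mathscr M$, with unique diagonal fill-in for squares $g\cdot e=m\cdot f$. Subobjects are represented by $\mathscr M$-morphisms; $\mathrm{Sub}(C)$ is a complete lattice, the union of $(m_k\colon C_k\to C)$ being the $\mathscr M$-part of the factorization of $[m_k]\colon\coprod_k C_k\to C$. $F$ preserves intersections: $F$ maps $\mathscr M$-morphisms into $\mathscr M$ and preserves wide pullbacks of families of $\mathscr M$-morphisms with common codomain; then for every $f\colon X\to FY$ there is a least subobject $n\colon Z\to Y$ with $f=Fn\cdot g$ for some $g$ (the bound of $f$). For $m\colon S\to C$ in $\mathscr M$, $\ominus_c(m)$ is the bound of $c\cdot m$. An $I$-pointed $F$-coalgebra is $(C,c,i_C)$ with $c\colon C\to FC$, $i_C\colon I\to C$; homomorphisms $h$ satisfy $d\cdot h=Fh\cdot c$ and $h\cdot i_C=i_D$. A subcoalgebra is a homomorphism of $I$-pointed coalgebras lying in $\mathscr M$; a coalgebra is reachable if each of its subcoalgebras is an isomorphism. *)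

Set Implicit Arguments.
Unset Strict Implicit.

Record Category := {
  Ob :> Type;
  Hom : Ob -> Ob -> Type;
  comp : forall a b c : Ob, Hom b c -> Hom a b -> Hom a c;
  idm : forall a : Ob, Hom a a;
  comp_assoc : forall a b c d (h : Hom c d) (g : Hom b c) (f : Hom a b),
      comp h (comp g f) = comp (comp h g) f;
  id_left : forall a b (f : Hom a b), comp (idm b) f = f;
  id_right : forall a b (f : Hom a b), comp f (idm a) = f
}.
Arguments Hom {_} _ _.
Arguments comp {_ a b c} _ _ : rename.
Arguments idm {_} a.
Notation "g ∘ f" := (comp g f) (at level 40, left associativity).

Record Functor (C D : Category) := {
  fobj :> C -> D;
  fmap : forall a b : C, Hom a b -> Hom (fobj a) (fobj b);
  fmap_id : forall a : C, fmap (idm a) = idm (fobj a);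
  fmap_comp : forall a b c (g : Hom b c) (f : Hom a b),
      fmap (g ∘ f) = fmap g ∘ fmap f
}.
Arguments fmap {C D} _ {a b} _.

Section Defs.
Variable C : Category.

Definition is_iso {a b : C} (f : Hom a b) : Prop :=
  exists g : Hom b a, g ∘ f = idm a /\ f ∘ g = idm b.

Definition mono {a b : C} (f : Hom a b) : Prop :=
  forall (z : C) (g h : Hom z a), f ∘ g = f ∘ h -> g = h.

Definition is_coproduct (K : Type) (X : K -> C) (Q : C)
    (inj : forall k, Hom (X k) Q) : Prop :=
  forall (Y : C) (f : forall k, Hom (X k) Y),
    exists! h : Hom Q Y, forall k, h ∘ inj k = f k.

Definition has_coproducts : Prop :=
  forall (K : Type) (X : K -> C),
    exists (Q : C) (inj : forall k, Hom (X k) Q), is_coproduct inj.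

(* Wide pullback (intersection) of a family m_k : X_k -> c, with
   projections p_k : P -> X_k and diagonal p0 : P -> c. *)
Definition is_wide_pullback (K : Type) (X : K -> C) (c : C)
    (m : forall k, Hom (X k) c) (P : C) (p : forall k, Hom P (X k))
    (p0 : Hom P c) : Prop :=
  (forall k, m k ∘ p k = p0) /\
  forall (Q : C) (q : forall k, Hom Q (X k)) (q0 : Hom Q c),
    (forall k, m k ∘ q k = q0) ->
    exists! u : Hom Q P, (forall k, p k ∘ u = q k) /\ p0 ∘ u = q0.

End Defs.

Record FactSys (C : Category) := {
  fE : forall a b : C, Hom a b -> Prop;
  fM : forall a b : C, Hom a b -> Prop;
  fE_iso : forall (a b c : C) (f : Hom a b) (i : Hom b c) (j : Hom c a),
      fE f -> is_iso i -> is_iso j -> fE (i ∘ f) /\ fE (f ∘ j);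
  fM_iso : forall (a b c : C) (f : Hom a b) (i : Hom b c) (j : Hom c a),
      fM f -> is_iso i -> is_iso j -> fM (i ∘ f) /\ fM (f ∘ j);
  fE_comp : forall (a b c : C) (f : Hom a b) (g : Hom b c),
      fE f -> fE g -> fE (g ∘ f);
  fM_comp : forall (a b c : C) (f : Hom a b) (g : Hom b c),
      fM f -> fM g -> fM (g ∘ f);
  f_factor : forall (a b : C) (f : Hom a b),
      exists (x : C) (e : Hom a x) (m : Hom x b), fE e /\ fM m /\ f = m ∘ e;
  f_diag : forall (a b c d : C) (e : Hom a b) (m : Hom c d)
      (f : Hom a c) (g : Hom b d),
      fE e -> fM m -> g ∘ e = m ∘ f ->
      exists! t : Hom b c, t ∘ e = f /\ m ∘ t = g
}.
Arguments fE {C} _ {a b} _.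
Arguments fM {C} _ {a b} _.

Section FS.
Variables (C : Category) (fs : FactSys C).

Definition well_powered : Prop :=
  forall c : C, exists (S : Type) (obj : S -> C) (sub : forall s, Hom (obj s) c),
    (forall s, fM fs (sub s)) /\
    forall (x : C) (m : Hom x c), fM fs m ->
      exists s (i : Hom x (obj s)), is_iso i /\ sub s ∘ i = m.

Definition preserves_intersections (F : Functor C C) : Prop :=
  (forall (a b : C) (f : Hom a b), fM fs f -> fM fs (fmap F f)) /\
  forall (K : Type) (X : K -> C) (c : C) (m : forall k, Hom (X k) c)
         (P : C) (p : forall k, Hom P (X k)) (p0 : Hom P c),
    (forall k, fM fs (m k)) ->
    is_wide_pullback m p p0 ->
    is_wide_pullback (fun k => fmap F (m k)) (fun k => fmap F (p k)) (fmap F p0).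

Definition is_bound (F : Functor C C) (x y z : C) (f : Hom x (F y))
    (n : Hom z y) : Prop :=
  fM fs n /\ (exists g : Hom x (F z), f = fmap F n ∘ g) /\
  forall (z' : C) (n' : Hom z' y), fM fs n' ->
    (exists g' : Hom x (F z'), f = fmap F n' ∘ g') ->
    exists h : Hom z z', n = n' ∘ h.

Definition is_ominus (F : Functor C C) (y : C) (c : Hom y (F y))
    (s : C) (m : Hom s y) (z : C) (n : Hom z y) : Prop :=
  @is_bound F s y z (c ∘ m) n.

(* m : R -> c is the union of the subobjects ms k : X k -> c, i.e. the
   M-part of the (E,M)-factorization of [ms k] : ∐ X k -> c. *)
Definition is_union (K : Type) (X : K -> C) (c : C)
    (ms : forall k, Hom (X k) c) (R : C) (m : Hom R c) : Prop :=
  fM fs m /\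
  exists (Q : C) (inj : forall k, Hom (X k) Q), is_coproduct inj /\
    exists e : Hom Q R, fE fs e /\ forall k, m ∘ e ∘ inj k = ms k.

Definition is_pcoalg_hom (F : Functor C C) (I : C)
    (a : C) (ca : Hom a (F a)) (ia : Hom I a)
    (b : C) (cb : Hom b (F b)) (ib : Hom I b) (h : Hom a b) : Prop :=
  cb ∘ h = fmap F h ∘ ca /\ h ∘ ia = ib.

Definition reachable (F : Functor C C) (I : C)
    (a : C) (ca : Hom a (F a)) (ia : Hom I a) : Prop :=
  forall (s : C) (cs : Hom s (F s)) (is : Hom I s) (h : Hom s a),
    fM fs h -> @is_pcoalg_hom F I s cs is a ca ia h -> is_iso h.

End FS.
Arguments is_bound {C} fs F {x y z} f n.
Arguments is_ominus {C} fs F {y} c {s} m {z} n.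
Arguments is_pcoalg_hom {C} F {I a} ca ia {b} cb ib h.
Arguments reachable {C} fs F {I a} ca ia.
Arguments is_union {C} fs {K X c} ms {R} m.
Arguments well_powered {C} fs.
Arguments preserves_intersections {C} fs F.

(** The union [m : R -> C] of the chain is a subcoalgebra because every [c ∘ m_k]
    factors through [F m_{k+1}], hence through [F m]; the copairing of these
    factorizations, together with the E-part of the union, yields [r] by diagonal
    fill-in.  For reachability, let [h] be a pointed subcoalgebra of [R].  Then
    [m ∘ h] is a pointed subcoalgebra of [C], and by induction it contains every
    [m_k]: [m_0] by diagonal fill-in against the E-morphism [i'], and
    [m_{k+1} = ⊖_c(m_k)] by minimality of the bound.  So [m ∘ h] contains the union
    [m], whence [h] is a split epimorphism as well as a monomorphism. *)

From Stdlib Require Import ChoiceFacts IndefiniteDescription.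

Ltac assoc_right := repeat rewrite <- comp_assoc.

Lemma coproduct_ext {C : Category} {K : Type} {X : K -> C} {Q Y : C}
  {inj : forall k, Hom (X k) Q} {a b : Hom Q Y} :
  is_coproduct inj -> (forall k, a ∘ inj k = b ∘ inj k) -> a = b.
Proof.
  intros Hcp Hab. destruct (Hcp Y (fun k => b ∘ inj k)) as [u [_ Hu]].
  transitivity u; [symmetry|]; apply Hu; auto.
Qed.

Lemma mono_split_epi_is_iso {C : Category} {a b : C} {h : Hom a b} {d : Hom b a} :
  mono h -> h ∘ d = idm b -> is_iso h.
Proof.
  intros Hh Hhd. exists d. split; [|exact Hhd].
  apply Hh. rewrite comp_assoc, Hhd, id_left, id_right. reflexivity.
Qed.

Lemma pcoalg_hom_comp {C : Category} {F : Functor C C} {I a b c : C}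
  {ca : Hom a (F a)} {ia : Hom I a} {cb : Hom b (F b)} {ib : Hom I b}
  {cc : Hom c (F c)} {ic : Hom I c} {h : Hom a b} {k : Hom b c} :
  is_pcoalg_hom F ca ia cb ib h -> is_pcoalg_hom F cb ib cc ic k ->
  is_pcoalg_hom F ca ia cc ic (k ∘ h).
Proof.
  intros [Hh Hih] [Hk Hik]. split.
  - rewrite fmap_comp, comp_assoc, Hk. assoc_right. rewrite Hh. reflexivity.
  - rewrite <- comp_assoc, Hih. exact Hik.
Qed.

Section Unions.
Context {C : Category} {fs : FactSys C}.
Context {K : Type} {X : K -> C} {c : C} {ms : forall k, Hom (X k) c}.
Context {R : C} {m : Hom R c}.
Hypothesis Hun : is_union fs ms m.

Lemma is_union_leg (k : K) : exists j : Hom (X k) R, m ∘ j = ms k.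
Proof.
  destruct Hun as [_ [Q [inj [_ [e [_ He]]]]]].
  exists (e ∘ inj k). rewrite comp_assoc. apply He.
Qed.

Lemma is_union_lift {y z : C} {f : Hom c y} {n : Hom z y} :
  fM fs n -> (forall k, exists g : Hom (X k) z, f ∘ ms k = n ∘ g) ->
  exists r : Hom R z, f ∘ m = n ∘ r.
Proof.
  intros Hn Hg.
  destruct (non_dep_dep_functional_choice functional_choice _ _ Hg) as [g Hfg].
  destruct Hun as [Hm [Q [inj [Hcp [e [He Hms]]]]]].
  destruct (Hcp z g) as [u [Hu _]].
  assert (Hsq : f ∘ m ∘ e = n ∘ u).
  { apply (coproduct_ext Hcp). intro k. assoc_right.
    rewrite Hu, (comp_assoc m), Hms. apply Hfg. }
  destruct (f_diag He Hn Hsq) as [r [[_ Hr] _]].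
  exists r. symmetry. exact Hr.
Qed.

Lemma is_union_least {z : C} {n : Hom z c} :
  fM fs n -> (forall k, exists t : Hom (X k) z, ms k = n ∘ t) ->
  exists d : Hom R z, m = n ∘ d.
Proof.
  intros Hn Ht. rewrite <- (id_left m).
  apply is_union_lift; [exact Hn|]. intro k.
  rewrite id_left. exact (Ht k).
Qed.

End Unions.

Lemma is_ominus_le_subcoalgebra {C : Category} {fs : FactSys C} {F : Functor C C}
  {y : C} {c : Hom y (F y)} {s : C} {ms : Hom s y} {z : C} {nz : Hom z y}
  {w : C} {n : Hom w y} {cn : Hom w (F w)} {t : Hom s w} :
  is_ominus fs F c ms nz -> fM fs n -> c ∘ n = fmap F n ∘ cn -> ms = n ∘ t ->
  exists u : Hom z w, nz = n ∘ u.
Proof.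
  intros [_ [_ Hleast]] Hn Hcn Hms. apply Hleast; [exact Hn|].
  exists (cn ∘ t). rewrite Hms, comp_assoc, Hcn. assoc_right. reflexivity.
Qed.

Section OminusChain.
Context {C : Category} {fs : FactSys C} {F : Functor C C}.
Hypothesis HFM : forall (a b : C) (f : Hom a b), fM fs f -> fM fs (fmap F f).
Context {I X : C} {x : Hom X (F X)} {iX : Hom I X}.
Context {Ck : nat -> C} {mk : forall k, Hom (Ck k) X} {i' : Hom I (Ck 0)}.
Context {R : C} {m : Hom R X}.
Hypothesis Hi' : fE fs i'.
Hypothesis HiX : iX = mk 0 ∘ i'.
Hypothesis Hmin : forall k, is_ominus fs F x (mk k) (mk (S k)).
Hypothesis Hun : is_union fs mk m.

Lemma chain_union_coalgebra : exists r : Hom R (F R), x ∘ m = fmap F m ∘ r.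
Proof.
  apply (is_union_lift Hun); [apply HFM; apply Hun|]. intro k.
  destruct (Hmin k) as [_ [[g Hg] _]].
  destruct (is_union_leg Hun (S k)) as [j Hj].
  exists (fmap F j ∘ g). rewrite Hg, <- Hj, fmap_comp, comp_assoc. reflexivity.
Qed.

Lemma chain_union_pointed : exists iR : Hom I R, m ∘ iR = iX.
Proof.
  destruct (is_union_leg Hun 0) as [j Hj].
  exists (j ∘ i'). rewrite comp_assoc, Hj. symmetry. exact HiX.
Qed.

Lemma chain_union_le_pointed_subcoalgebra {S : C} {cS : Hom S (F S)} {iS : Hom I S}
  {n : Hom S X} :
  fM fs n -> is_pcoalg_hom F cS iS x iX n -> exists d : Hom R S, m = n ∘ d.
Proof.
  intros Hn [Hcn HiS]. apply (is_union_least Hun); [exact Hn|]. intro k.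
  induction k as [|k [t Ht]].
  - assert (Hsq : mk 0 ∘ i' = n ∘ iS) by (rewrite HiS; symmetry; exact HiX).
    destruct (f_diag Hi' Hn Hsq) as [t [[_ Ht] _]].
    exists t. symmetry. exact Ht.
  - exact (is_ominus_le_subcoalgebra (Hmin k) Hn Hcn Ht).
Qed.

End OminusChain.

Theorem theorem5p20
  (C : Category) (fs : FactSys C)
  (Hcop : has_coproducts C)
  (Hwp : well_powered fs)
  (Hmono : forall (a b : C) (f : Hom a b), fM fs f -> mono f)
  (F : Functor C C) (HF : preserves_intersections fs F)
  (I X : C) (x : Hom X (F X)) (iX : Hom I X)
  (Ck : nat -> C) (mk : forall k, Hom (Ck k) X) (i' : Hom I (Ck 0))
  (R : C) (m : Hom R X) :
  fE fs i' -> fM fs (mk 0) -> iX = mk 0 ∘ i' ->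
  (forall k, is_ominus fs F x (mk k) (mk (S k))) ->
  is_union fs mk m ->
  exists (iR : Hom I R) (r : Hom R (F R)),
    is_pcoalg_hom F r iR x iX m /\ reachable fs F r iR.
Proof.
  (* The unused hypotheses only guarantee that the bounds and the union exist,
     and these are given. *)
  intros Hi' _ HiX Hmin Hun. destruct HF as [HFM _].
  destruct (chain_union_coalgebra HFM Hmin Hun) as [r Hr].
  destruct (chain_union_pointed HiX Hun) as [iR HiR].
  assert (Hhom : is_pcoalg_hom F r iR x iX m) by (split; assumption).
  exists iR, r. split; [exact Hhom|].
  intros S cS iS h Hh Hsub.
  assert (HmM : fM fs m) by apply Hun.
  destruct (chain_union_le_pointed_subcoalgebra Hi' HiX Hmin Hun
              (fM_comp Hh HmM) (pcoalg_hom_comp Hsub Hhom)) as [d Hd].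
  apply (mono_split_epi_is_iso (d := d)); [exact (Hmono _ _ h Hh)|].
  apply (Hmono _ _ m HmM). rewrite comp_assoc, id_right. symmetry. exact Hd.
Qed.
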